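(* Let $n\geq 4$. Then the wheel $\mathcal{W}_n$ is an $\mathcal{N}$ position for Grim if and only if the path $\mathcal{P}_{n-2}$ is an $\mathcal{N}$ position for Grim.
   Context: Grim is a two-player game on a finite simple undirected graph. Any isolated vertices of the starting graph are deleted before play begins. Players alternate moves; a move consists of selecting a vertex of the current graph and deleting it together with all its incident edges, after which every vertex that has become isolated is also deleted. The player who makes the last legal move wins (a player facing the empty graph has no move and loses). A graph is an $\mathcal{N}$ position if the player about to move has a winning strategy, and a $\mathcal{P}$ position otherwise. $\mathcal{P}_m$ is the path on $m$ vertices, and the wheel $\mathcal{W}_n=\mathcal{C}_{n-1}+K_1$ is the cycle on $n-1$ vertices joined to a single extra vertex (the center) adjacent to every cycle vertex. *)

From mathcomp Require Import all_boot.
Set Implicit Arguments. Unset Strict Implicit. Unset Printing Implicit Defensive.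

(* A finite simple graph is a finType T with a symmetric irreflexive relation e.
   A position of Grim is the induced subgraph on a vertex set S : {set T}. *)

Definition clean (T : finType) (e : rel T) (S : {set T}) : {set T} :=
  [set x in S | [exists y in S, e x y]].

(* winf e k S: the player to move wins on the (already cleaned) position S,
   computed with fuel k (k >= #|S| suffices, since each move strictly
   decreases the number of vertices). *)
Fixpoint winf (T : finType) (e : rel T) (k : nat) (S : {set T}) : bool :=
  match k with
  | 0 => false
  | k'.+1 => [exists v in S, ~~ winf e k' (clean e (S :\ v))]
  end.

Definition grim_N (T : finType) (e : rel T) : bool :=
  winf e #|T| (clean e [set: T]).

Definition path_rel (m : nat) : rel 'I_m :=
  fun i j => (i.+1 == j :> nat) || (j.+1 == i :> nat).

(* Wheel W_n = C_(n-1) + K_1 on vertices 0..n-1: vertex 0 is the center,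
   vertices 1..n-1 form a cycle 1-2-...-(n-1)-1. *)
Definition wheel_rel (n : nat) : rel 'I_n :=
  fun i j =>
    (i != j) &&
    [|| (i == 0 :> nat), (j == 0 :> nat),
        (i.+1 == j :> nat), (j.+1 == i :> nat),
        ((i == 1 :> nat) && (j == n.-1 :> nat))
      | ((j == 1 :> nat) && (i == n.-1 :> nat))].

Arguments path_rel m : clear implicits.
Arguments wheel_rel n : clear implicits.

(* Every vertex of the wheel has degree at least 3, so no move ever isolates a
   vertex before the centre is gone.  Deleting the centre together with any rim
   vertex, in either order, leaves exactly the path P_(n-2).  If P_(n-2) is an
   N position, the first player deletes the centre: whichever rim vertex the
   opponent deletes next, the first player moves first on P_(n-2).  If it is a
   P position, the second player answers every first move by completing the
   pair {centre, rim vertex}, and the first player must then move first on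
   P_(n-2). *)
From mathcomp Require Import all_boot.
From mathcomp Require Import zify.

Set Implicit Arguments.
Unset Strict Implicit.
Unset Printing Implicit Defensive.

Lemma winfS (T : finType) (e : rel T) k (S : {set T}) :
  winf e k.+1 S = [exists v in S, ~~ winf e k (clean e (S :\ v))].
Proof. by []. Qed.

Section WinfImset.

Variables (T1 T2 : finType) (e1 : rel T1) (e2 : rel T2) (f : T1 -> T2).
Hypothesis f_inj : injective f.
Hypothesis f_edge : forall x y, e2 (f x) (f y) = e1 x y.

Lemma imset_setD1 (A : {set T1}) v : f @: (A :\ v) = f @: A :\ f v.
Proof.
apply/setP=> y; apply/imsetP/idP.
- by case=> x; rewrite !inE => /andP[xv xA] ->; rewrite (inj_eq f_inj) xv imset_f.
- rewrite !inE => /andP[yv /imsetP[x xA y_fx]]; exists x => //.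
  by rewrite !inE xA andbT; apply: contraNneq yv => <-; rewrite y_fx.
Qed.

Lemma imset_clean (A : {set T1}) : f @: clean e1 A = clean e2 (f @: A).
Proof.
apply/setP=> y; apply/imsetP/idP.
- case=> x; rewrite inE => /andP[xA /existsP[z /andP[zA xz]]] ->.
  rewrite inE imset_f //=; apply/existsP; exists (f z).
  by rewrite imset_f // f_edge.
- rewrite inE => /andP[/imsetP[x xA ->] /existsP[_ /andP[/imsetP[z zA ->] xz]]].
  exists x => //; rewrite inE xA; apply/existsP; exists z.
  by rewrite zA -f_edge.
Qed.

Lemma winf_imset k (A : {set T1}) : winf e2 k (f @: A) = winf e1 k A.
Proof.
elim: k A => [|k IHk] A //=; apply/existsP/existsP.
- case=> _ /andP[/imsetP[v vA ->]]; rewrite -imset_setD1 -imset_clean IHk => win.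
  by exists v; rewrite vA.
- case=> v /andP[vA win]; exists (f v).
  by rewrite imset_f //= -imset_setD1 -imset_clean IHk.
Qed.

End WinfImset.

Lemma setD1C (T : finType) (A : {set T}) x y : A :\ x :\ y = A :\ y :\ x.
Proof. by rewrite !setDDl setUC. Qed.

Section Wheel.

Variable m : nat.
Hypothesis m_gt1 : 1 < m.

Notation W := (wheel_rel m.+2).
Notation P := (path_rel m).

Lemma wheel_neighbour (x v : 'I_m.+2) : exists2 y, y != v & W x y.
Proof.
have xlt := ltn_ord x; have vlt := ltn_ord v.
have [x0 | x_neq0] := eqVneq (x : nat) 0.
  exists (inord (if (v : nat) == 1 then 2 else 1));
    rewrite /wheel_rel -!val_eqE /= inordK; case: ifP; lia.
have [v0 | v_neq0] := eqVneq (v : nat) 0.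
  exists (inord (if (x : nat) <= m then x.+1 else 1));
    rewrite /wheel_rel -!val_eqE /= inordK; case: ifP; lia.
by exists ord0; rewrite /wheel_rel -!val_eqE /=; lia.
Qed.

Lemma clean_wheel_setT : clean W [set: 'I_m.+2] = [set: 'I_m.+2].
Proof.
apply/setP=> x; rewrite !inE; have [y _ xy] := wheel_neighbour x x.
by apply/existsP; exists y; rewrite inE.
Qed.

Lemma clean_wheel_setD1 v : clean W ([set: 'I_m.+2] :\ v) = [set: 'I_m.+2] :\ v.
Proof.
apply/setP=> x; rewrite inE andb_idr // => _; have [y yv xy] := wheel_neighbour x v.
by apply/existsP; exists y; rewrite !inE yv.
Qed.

(* [rim_after u i] is the rim vertex [i + 1] steps after [u] along the cycle
   [1 -> 2 -> ... -> m.+1 -> 1]. *)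
Definition rim_after (u : 'I_m.+2) (i : 'I_m) : 'I_m.+2 :=
  inord (if i + u.+1 < m.+2 then i + u.+1 else i + u - m).

Section RimAfter.

Variable u : 'I_m.+2.

Lemma rim_afterE i :
  rim_after u i = (if i + u.+1 < m.+2 then i + u.+1 else i + u - m) :> nat.
Proof. by rewrite inordK //; have := ltn_ord i; have := ltn_ord u; case: ifP; lia. Qed.

Lemma rim_after_inj : injective (rim_after u).
Proof.
move=> i j /(congr1 val); rewrite /= !rim_afterE => eq_ij; apply/val_inj => /=.
move: eq_ij; have := ltn_ord i; have := ltn_ord j; have := ltn_ord u.
by do 2 case: ifP; lia.
Qed.

Lemma wheel_rim_after i j : W (rim_after u i) (rim_after u j) = P i j.
Proof.
rewrite /wheel_rel /path_rel -val_eqE /= !rim_afterE.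
by have := ltn_ord i; have := ltn_ord j; have := ltn_ord u; do 2 case: ifP; lia.
Qed.

Lemma imset_rim_after : u != ord0 ->
  rim_after u @: [set: 'I_m] = [set: 'I_m.+2] :\ ord0 :\ u.
Proof.
move=> u_neq0; apply/eqP; rewrite eqEcard; apply/andP; split.
  apply/subsetP=> _ /imsetP[i _ ->]; rewrite !inE -!val_eqE /= rim_afterE.
  by have := ltn_ord i; have := ltn_ord u; case: ifP; lia.
rewrite card_imset; last exact: rim_after_inj.
have := cardsD1 u ([set: 'I_m.+2] :\ ord0); have := cardsD1 ord0 [set: 'I_m.+2].
rewrite !inE u_neq0 /= [#|[set: 'I_m]|]cardsT card_ord cardsT card_ord.
by move=> card_D1 card_D2; move: card_D1; rewrite card_D2 !add1n => -[<-].
Qed.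

End RimAfter.

Lemma winf_wheel_setD2 u : u != ord0 ->
  winf W m (clean W ([set: 'I_m.+2] :\ ord0 :\ u)) = grim_N P.
Proof.
move=> u_neq0; rewrite -imset_rim_after // -(imset_clean (wheel_rim_after u)).
by rewrite (winf_imset (@rim_after_inj u) (wheel_rim_after u)) /grim_N card_ord.
Qed.

Lemma winf_wheel_center : winf W m.+1 ([set: 'I_m.+2] :\ ord0) = ~~ grim_N P.
Proof.
rewrite winfS; apply/existsP/idP => [[u /andP[]]|P_lost].
  by rewrite !inE andbT => u_neq0; rewrite winf_wheel_setD2.
have one_neq0 : inord 1 != ord0 :> 'I_m.+2 by rewrite -val_eqE /= inordK.
by exists (inord 1); rewrite !inE one_neq0 winf_wheel_setD2.
Qed.

Lemma winf_wheel_setD1 v : ~~ grim_N P -> winf W m.+1 ([set: 'I_m.+2] :\ v).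
Proof.
move=> P_lost; have [->|v_neq0] := eqVneq v ord0; first by rewrite winf_wheel_center.
rewrite winfS; apply/existsP; exists ord0.
by rewrite !inE eq_sym v_neq0 setD1C winf_wheel_setD2.
Qed.

End Wheel.

Theorem corollary5p7 (n : nat) (hn : 4 <= n) :
  grim_N (wheel_rel n) <-> grim_N (path_rel (n - 2)).
Proof.
case: n hn => [|[|m]] // hn; rewrite subn2 /=.
rewrite {1}/grim_N card_ord clean_wheel_setT // winfS; split.
  move=> /existsP[v /andP[_]]; rewrite clean_wheel_setD1 //.
  by apply/contraNT/winf_wheel_setD1.
move=> P_won; apply/existsP; exists ord0.
by rewrite in_setT clean_wheel_setD1 // winf_wheel_center // P_won.
Qed.
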